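(* Let $(\hat T,\hat\ell)$ be a vine decomposition of a graph $G=(V,E)$, with labels $\hat V_s$. Let $X\subseteq V$ and let $C$ be the vertex set of a connected component of $G-X$. Suppose there is a node $t$ of $\hat T$ such that $\hat V_t\cap C=\emptyset$ and every set separating $X$ from $\hat V_t$ in $G$ has at least $|X|$ vertices. Then there is a vine decomposition $(T,\ell)$ of the induced subgraph $G[X\cup C]$ with the same tree $T=\hat T$ and labels $V_s$ such that: (1) $V_t=X$; (2) $V_s\subseteq\hat V_s$ for every leaf $s\neq t$ of $T$; (3) $|V_s|\le|\hat V_s|$ for every node $s$ of $T$.
   Context: Vine decomposition of a graph $H=(W,F)$: a pair $(T,\ell)$ where $T$ is a tree and $\ell$ assigns to each node $t$ of $T$ a set $V_t\subseteq W$, such that, writing $T_v=\{t: v\in V_t\}$: (i) for each $v\in W$, $T_v$ is nonempty and induces a connected subtree of $T$; (ii) for each edge $uv\in F$, the subtrees $T_u$ and $T_v$ either share a node or some node of $T_u$ is adjacent in $T$ to some node of $T_v$. A set $S\subseteq V$ separates $A$ from $B$ if every path in $G$ (including one-vertex paths) from a vertex of $A$ to a vertex of $B$ contains a vertex of $S$. *)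

From mathcomp Require Import all_boot.
Set Implicit Arguments. Unset Strict Implicit. Unset Printing Implicit Defensive.

Definition simple_graph (V : finType) (e : rel V) : Prop :=
  symmetric e /\ irreflexive e.

Definition restrict (V : finType) (e : rel V) (S : {set V}) : rel V :=
  [rel x y | [&& e x y, x \in S & y \in S]].

(* S induces a connected subgraph of (V,e) (S is nonempty is required separately). *)
Definition induces_connected (V : finType) (e : rel V) (S : {set V}) : Prop :=
  forall a b, a \in S -> b \in S -> connect (restrict e S) a b.

Definition is_tree (N : finType) (tN : rel N) : Prop :=
  [/\ 0 < #|N|, simple_graph tN,
      (forall x y, connect tN x y) &
      ~ (exists c : seq N, [/\ 3 <= size c, uniq c & cycle tN c])].

Definition leaf (N : finType) (tN : rel N) (s : N) : bool :=
  #|[set u | tN s u]| == 1.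

(* Vine decomposition (tree tN, labels lab) of the graph H = (W, e restricted to W).
   Labels are subsets of W. *)
Definition vine_decomp (N V : finType) (tN : rel N) (W : {set V}) (e : rel V)
    (lab : N -> {set V}) : Prop :=
  [/\ forall s, lab s \subset W,
      forall v, v \in W ->
        (exists s, v \in lab s) /\ induces_connected tN [set s | v \in lab s] &
      forall u v, u \in W -> v \in W -> e u v ->
        exists s s', [/\ u \in lab s, v \in lab s' & (s == s') || tN s s']].

(* S separates A from B in (V,e): every path (including one-vertex paths)
   from a vertex of A to a vertex of B contains a vertex of S. *)
Definition separates (V : finType) (e : rel V) (S A B : {set V}) : Prop :=
  forall (x : V) (p : seq V), x \in A -> path e x p -> last x p \in B ->
    exists2 y, y \in x :: p & y \in S.

Definition component_of_minus (V : finType) (e : rel V) (X C : {set V}) : Prop :=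
  exists2 x, x \notin X & C = [set y | connect (restrict e (~: X)) x y].

From mathcomp Require Import all_boot.
From Stdlib Require Import Classical.
Set Implicit Arguments. Unset Strict Implicit. Unset Printing Implicit Defensive.

(* By Menger's theorem there are |X| disjoint paths P_x (x in X) from X to
   hat t, each leaving X at its first step.  They avoid C: once a path enters
   the component C it can only leave it through X, and hat t misses C.  The
   new label of a node s keeps hat s :&: C and contains x in X iff P_x meets
   hat s (leaves s <> t instead keep hat s :&: (X :|: C)).  The nodes whose
   label contains x are those whose bags meet P_x, up to some leaves, hence
   form a subtree; and sending x to the first vertex of P_x in hat s injects
   the X-part of the new label into hat s :\: C.

   Menger's theorem is proved by induction on the number of arcs: if deleting
   an arc xy leaves every A-B separator of size >= k we are done; otherwise a
   smaller separator S of r - xy makes x+S and y+S separators of size k, and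
   gluing k paths from A to x+S with k paths from y+S to B (both problems have
   fewer arcs) along x -> y gives the linkage. *)

Section PathsAvoiding.
Variables (V : finType) (r : rel V).

Definition rel_tail_notin (X : {set V}) : rel V := fun u v => r u v && (u \notin X).
Definition rel_head_notin (Y : {set V}) : rel V := fun u v => r u v && (v \notin Y).

Lemma tail_notin_sub X : subrel (rel_tail_notin X) r.
Proof. by move=> u v /andP []. Qed.

Lemma head_notin_sub Y : subrel (rel_head_notin Y) r.
Proof. by move=> u v /andP []. Qed.

Lemma path_tail_notinE X x p :
  path (rel_tail_notin X) x p = path r x p && all [pred u | u \notin X] (belast x p).
Proof. by elim: p x => //= c p IH x; rewrite IH andbACA. Qed.

Lemma path_head_notinE Y x p :
  path (rel_head_notin Y) x p = path r x p && all [pred v | v \notin Y] p.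
Proof. by elim: p x => //= c p IH x; rewrite IH andbACA. Qed.

Lemma path_tail_notin_mem X a p v :
  path (rel_tail_notin X) a p -> v \in a :: p -> v \in X -> v = last a p.
Proof.
rewrite path_tail_notinE lastI mem_rcons inE => /andP [_ /allP Xp] /predU1P [//|vp vX].
by have := Xp v vp; rewrite /= vX.
Qed.

Lemma path_head_notin_mem Y b q v :
  path (rel_head_notin Y) b q -> v \in b :: q -> v \in Y -> v = b.
Proof.
rewrite path_head_notinE inE => /andP [_ /allP Yq] /predU1P [//|vq vY].
by have := Yq v vq; rewrite /= vY.
Qed.

Lemma path_prefix_tail_notin (X : {set V}) x p : path r x p -> has (mem X) (x :: p) ->
  exists q, [/\ path (rel_tail_notin X) x q, last x q \in X & {subset x :: q <= x :: p}].
Proof.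
elim: p x => [|c p IH] x /=; first by rewrite orbF => _ xX; exists [::]; split.
case/andP=> xc cp; have [xX _|xX /= cpX] := boolP (x \in X).
  by exists [::]; split=> // z; rewrite mem_seq1 => /eqP->; apply: mem_head.
have [q [cq qX qp]] := IH c cp cpX.
exists (c :: q); split=> //=; first by rewrite /rel_tail_notin xc xX.
by move=> z /predU1P [->|/qp zp]; [apply: mem_head | rewrite inE zp orbT].
Qed.

Lemma path_suffix_head_notin (Y : {set V}) x p : path r x p -> has (mem Y) (x :: p) ->
  exists y q, [/\ y \in Y, path (rel_head_notin Y) y q, last y q = last x p
                & {subset y :: q <= x :: p}].
Proof.
elim: p x => [|c p IH] x /=; first by rewrite orbF => _ xY; exists x, [::]; split.
case/andP=> xc cp; have [cpY _|cpY /= xY] := boolP (has (mem Y) (c :: p)).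
  have [y [q [yY yq lq qp]]] := IH c cp cpY.
  by exists y, q; split=> // z /qp zp; rewrite inE zp orbT.
exists x, (c :: p); split=> //; first by move: xY cpY => /= /orP [//|->].
by rewrite path_head_notinE /= xc cp; move: cpY; rewrite -all_predC.
Qed.

Lemma separates_suffix (Y T A B : {set V}) :
  separates r Y A B -> separates (rel_head_notin Y) T Y B -> separates r T A B.
Proof.
move=> sepY sepT x p xA xp xpB.
have [y [q [yY yq lq qp]]] := path_suffix_head_notin xp (introT hasP (sepY x p xA xp xpB)).
by have := sepT y q yY yq; rewrite lq => /(_ xpB) [w /qp wp wT]; exists w.
Qed.

Lemma separates_prefix (X T A B : {set V}) :
  separates r X A B -> separates (rel_tail_notin X) T A X -> separates r T A B.
Proof.
move=> sepX sepT x p xA xp xpB.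
have [q [xq qX qp]] := path_prefix_tail_notin xp (introT hasP (sepX x p xA xp xpB)).
by have [w /qp wp wT] := sepT x q xA xq qX; exists w.
Qed.

Lemma separates_head_notin (T A B : {set V}) :
  separates (rel_head_notin A) T A B -> separates r T A B.
Proof. by apply: separates_suffix => x p xA _ _; exists x; rewrite ?mem_head. Qed.

End PathsAvoiding.

Lemma separatesU1 (V : finType) (r r' : rel V) z (S A B : {set V}) :
  (forall u v, r u v -> u != z -> v != z -> r' u v) ->
  separates r' S A B -> separates r (z |: S) A B.
Proof.
move=> rr' sepS x p xA xp xpB.
have [zp|zNp] := boolP (z \in x :: p); first by exists z; rewrite ?setU11.
have xp' : path r' x p.
  apply: (sub_in_path (P := predC1 z)) xp; first by move=> u v uz vz /rr'; apply.
  by apply/allP => w wp; apply: contraNneq zNp => <-.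
by have [w wp wS] := sepS x p xA xp' xpB; exists w; rewrite // inE wS orbT.
Qed.

Section Linkages.
Variable V : finType.
Implicit Types (r : rel V) (A B D W X Y : {set V}) (f g : V -> seq V).

Definition arcs r : {set V * V} := [set uv | r uv.1 uv.2].

Definition del_arc r x y : rel V := fun u v => r u v && ((u, v) != (x, y)).

Definition paths_to r B D f := forall a, a \in D -> path r a (f a) /\ last a (f a) \in B.

Definition paths_disjoint D f :=
  forall a b v, a \in D -> b \in D -> v \in a :: f a -> v \in b :: f b -> a = b.

Definition linked r A B k :=
  exists D f, [/\ D \subset A, #|D| = k, paths_to r B D f & paths_disjoint D f].

Lemma card_arcs_del r x y : r x y -> #|arcs (del_arc r x y)| < #|arcs r|.
Proof.
move=> rxy; apply: proper_card; apply/properP; split.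
  by apply/subsetP => uv; rewrite !inE => /andP [].
by exists (x, y); rewrite !inE //= /del_arc eqxx andbF.
Qed.

Lemma arcsS r r' : subrel r r' -> arcs r \subset arcs r'.
Proof. by move=> rr'; apply/subsetP => -[u v]; rewrite !inE; apply: rr'. Qed.

Lemma tail_notin_del_arc r X x y :
  x \in X -> subrel (rel_tail_notin r X) (del_arc r x y).
Proof.
move=> xX u v /andP [ruv uX]; rewrite /del_arc ruv.
by apply: contraNneq uX => -[-> _].
Qed.

Lemma head_notin_del_arc r Y x y :
  y \in Y -> subrel (rel_head_notin r Y) (del_arc r x y).
Proof.
move=> yY u v /andP [ruv vY]; rewrite /del_arc ruv.
by apply: contraNneq vY => -[_ ->].
Qed.

Lemma linked_sub r r' A B k : subrel r r' -> linked r A B k -> linked r' A B k.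
Proof.
move=> rr' [D [f [DA cD fB fD]]]; exists D, f; split=> // a /fB [af lB].
by split=> //; apply: sub_path af.
Qed.

Lemma linked_arcs0 r A B k :
  arcs r = set0 -> (forall S, separates r S A B -> k <= #|S|) -> linked r A B k.
Proof.
move=> arcs0 sep; have noarc u v : ~~ r u v.
  by apply/negP => ruv; have := in_set0 (u, v); rewrite -arcs0 inE ruv.
have /card_geqP [s [us ks sAB]] : k <= #|A :&: B|.
  apply: sep => x [|c p] xA /=; last by rewrite (negbTE (noarc x c)).
  by move=> _ xB; exists x; rewrite ?mem_head ?inE ?xA.
exists [set a in s], (fun=> [::]); split.
- by apply/subsetP => a; rewrite inE => /sAB /setIP [].
- by rewrite cardsE (card_uniqP us).
- by move=> a; rewrite inE => /sAB /setIP [].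
- by move=> a b v _ _; rewrite !mem_seq1 => /eqP-> /eqP.
Qed.

Lemma paths_disjoint_glue D W f g (j : V -> V) (ext : V -> seq V) :
  paths_disjoint D f -> paths_disjoint W g ->
  {in D, forall a, j a \in W} -> {in D &, injective j} ->
  (forall a w v, a \in D -> w \in W -> v \in a :: f a -> v \in w :: g w -> w = j a) ->
  (forall a, {subset ext a <= j a :: g (j a)}) ->
  paths_disjoint D (fun a => f a ++ ext a).
Proof.
move=> fD gD jW jinj cross ext_sub a b v aD bD.
have split_mem c : v \in c :: f c ++ ext c -> v \in c :: f c \/ v \in j c :: g (j c).
  by rewrite -cat_cons mem_cat => /orP [|/ext_sub]; [left | right].
case/split_mem => [va|va] /split_mem [vb|vb]; first exact: fD va vb.
- by apply: jinj => //; rewrite (cross a (j b) v aD (jW b bD) va vb).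
- by apply: jinj => //; rewrite (cross b (j a) v bD (jW a aD) vb va).
- by apply: jinj => //; apply: gD (jW a aD) (jW b bD) va vb.
Qed.

End Linkages.

Section MengerStep.
Variables (V : finType) (r : rel V) (A B S : {set V}) (k : nat) (x y : V).
Hypothesis rxy : r x y.
Hypothesis sepAB : forall T, separates r T A B -> k <= #|T|.
Hypothesis sepS : separates (del_arc r x y) S A B.
Hypothesis ltSk : #|S| < k.

Local Notation X := (x |: S).
Local Notation Y := (y |: S).

Lemma separates_xS : separates r X A B.
Proof.
apply: separatesU1 sepS => u v ruv ux _; rewrite /del_arc ruv.
by apply: contra_neq ux; case.
Qed.

Lemma separates_yS : separates r Y A B.
Proof.
apply: separatesU1 sepS => u v ruv _ vy; rewrite /del_arc ruv.
by apply: contra_neq vy; case.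
Qed.

Lemma x_notin_S : x \notin S.
Proof. by apply: contraTN (sepAB separates_xS) => xS; rewrite cardsU1 xS -ltnNge. Qed.

Lemma y_notin_S : y \notin S.
Proof. by apply: contraTN (sepAB separates_yS) => yS; rewrite cardsU1 yS -ltnNge. Qed.

Lemma card_yS : #|Y| = k.
Proof. by apply/eqP; rewrite eqn_leq (sepAB separates_yS) andbT cardsU1 y_notin_S. Qed.

Lemma separates_tail_xS T : separates (rel_tail_notin r X) T A X -> k <= #|T|.
Proof. by move=> sepT; apply: sepAB (separates_prefix separates_xS sepT). Qed.

Lemma separates_head_yS T : separates (rel_head_notin r Y) T Y B -> k <= #|T|.
Proof. by move=> sepT; apply: sepAB (separates_suffix separates_yS sepT). Qed.

Section Glue.
Variables (D : {set V}) (f g : V -> seq V).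
Hypotheses (DA : D \subset A) (cardD : #|D| = k).
Hypotheses (f_to : paths_to (rel_tail_notin r X) X D f) (f_disj : paths_disjoint D f).
Hypotheses (g_to : paths_to (rel_head_notin r Y) B Y g) (g_disj : paths_disjoint Y g).

Let move_xy z := if z == x then y else z.
Let junction a := move_xy (last a (f a)).
Let continuation a := if last a (f a) == x then y :: g y else g (last a (f a)).

Lemma move_xy_inj : {in X &, injective move_xy}.
Proof.
move=> z1 z2; rewrite /move_xy !inE.
case: (z1 =P x) => [->|_] /= z1S; case: (z2 =P x) => [->|_] /= z2S // E.
- by move: y_notin_S; rewrite E z2S.
- by move: y_notin_S; rewrite -E z1S.
Qed.

Lemma junction_in_Y a : a \in D -> junction a \in Y.
Proof.
case/f_to => _; rewrite /junction /move_xy !inE.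
by case: eqP => [_ _|_ /= ->]; rewrite ?eqxx ?orbT.
Qed.

Lemma junction_inj : {in D &, injective junction}.
Proof.
move=> a b aD bD /(move_xy_inj (f_to aD).2 (f_to bD).2) eab.
by apply: f_disj aD bD (mem_last _ _) _; rewrite eab mem_last.
Qed.

(* A common vertex outside S would yield an A-B path of r - xy avoiding S. *)
Lemma f_meets_g a w v :
  a \in D -> w \in Y -> v \in a :: f a -> v \in w :: g w -> w = junction a.
Proof.
move=> aD wY va vw; have [fa _] := f_to aD; have [gw _] := g_to wY.
have [vS|vNS] := boolP (v \in S).
  rewrite /junction /move_xy -(path_tail_notin_mem fa va (setU1r x vS)) ifN.
    exact: esym (path_head_notin_mem gw vw (setU1r y vS)).
  by apply: contraNneq x_notin_S => <-.
exfalso; move: fa gw (g_to wY).2; case/splitPl: va => p1 p2 lp1.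
case/splitPl: vw => q1 q2 lq1.
rewrite !cat_path last_cat lp1 lq1 => /andP [p1_ _] /andP [_ q2_] q2B.
have := @sepS a (p1 ++ q2) (subsetP DA a aD).
rewrite cat_path last_cat lp1 q2B (sub_path (tail_notin_del_arc y (setU11 x S)) p1_).
rewrite (sub_path (head_notin_del_arc x (setU11 y S)) q2_) => /(_ isT isT) [u].
rewrite -cat_cons mem_cat => /orP [up|uq] uS; move: vNS.
  by rewrite -lp1 -(path_tail_notin_mem p1_ up (setU1r x uS)) uS.
have uvq : u \in v :: q2 by rewrite inE uq orbT.
by rewrite -(path_head_notin_mem q2_ uvq (setU1r y uS)) uS.
Qed.

Lemma linked_glued : linked r A B k.
Proof.
exists D, (fun a => f a ++ continuation a); split=> //.
  move=> a aD; have [fa zX] := f_to aD.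
  rewrite cat_path last_cat (sub_path (@tail_notin_sub _ r _) fa).
  rewrite /continuation; case: eqP => [zx|zx] /=.
    by have [gy gB] := g_to (setU11 y S); rewrite zx rxy (sub_path (@head_notin_sub _ r _) gy).
  have zY : last a (f a) \in Y by case/setU1P: zX => // zS; rewrite setU1r.
  by have [gz gB] := g_to zY; rewrite (sub_path (@head_notin_sub _ r _) gz).
apply: paths_disjoint_glue f_disj g_disj junction_in_Y junction_inj f_meets_g _ => a.
by rewrite /continuation /junction /move_xy; case: eqP => _ u // ug; rewrite inE ug orbT.
Qed.

End Glue.

Lemma linked_del_arc :
  linked (rel_tail_notin r X) A X k -> linked (rel_head_notin r Y) Y B k -> linked r A B k.
Proof.
move=> [D [f [DA cardD fX fD]]] [W [g [sub_WY cardW gB gW]]].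
have W_eq : W = Y by apply/eqP; rewrite eqEcard sub_WY cardW card_yS leqnn.
by rewrite W_eq in gB gW; apply: linked_glued DA cardD fX fD gB gW.
Qed.

End MengerStep.

Theorem menger (V : finType) (r : rel V) (A B : {set V}) (k : nat) :
  (forall S, separates r S A B -> k <= #|S|) -> linked r A B k.
Proof.
have [n] := ubnP #|arcs r|; elim: n => // n IH in r A B k *.
rewrite ltnS => le_rn sep.
have [arcs0|[[x y]]] := set_0Vmem (arcs r); first exact: linked_arcs0.
rewrite inE /= => rxy; have lt_del := leq_trans (card_arcs_del rxy) le_rn.
have [sep'|] := classic (forall S, separates (del_arc r x y) S A B -> k <= #|S|).
  by apply: linked_sub (IH _ _ _ _ lt_del sep') => u v /andP [].
move=> /not_all_ex_not [S /(imply_to_and (separates _ _ _ _)) [sepS /negP]].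
rewrite -ltnNge => ltSk.
apply: (linked_del_arc rxy sep sepS ltSk); apply: IH.
- exact: leq_ltn_trans (subset_leq_card (arcsS (tail_notin_del_arc y (setU11 x S)))) lt_del.
- exact: separates_tail_xS sep sepS.
- exact: leq_ltn_trans (subset_leq_card (arcsS (head_notin_del_arc x (setU11 y S)))) lt_del.
- exact: separates_head_yS sep sepS.
Qed.

Section Subtrees.
Variables (T : finType) (r : rel T).
Hypothesis r_sym : symmetric r.

Lemma connect_restrictS (A B : {set T}) a b :
  A \subset B -> connect (restrict r A) a b -> connect (restrict r B) a b.
Proof.
move=> AB; apply: connect_sub => u v /and3P [ruv uA vA]; apply: connect1.
by rewrite /restrict /= ruv !(subsetP AB).
Qed.

Lemma restrict_sym (A : {set T}) : symmetric (restrict r A).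
Proof. by move=> u v; rewrite /restrict /= r_sym [(u \in A) && _]andbC. Qed.

Lemma induces_connectedU (A B : {set T}) a b :
  induces_connected r A -> induces_connected r B -> a \in A -> b \in B ->
  (a == b) || r a b -> induces_connected r (A :|: B).
Proof.
move=> connA connB aA bB ab.
have AB : A \subset A :|: B := subsetUl A B.
have BB : B \subset A :|: B := subsetUr A B.
have A_to_B u w : u \in A -> w \in B -> connect (restrict r (A :|: B)) u w.
  move=> uA wB; apply: connect_trans (connect_restrictS AB (connA u a uA aA)) _.
  apply: connect_trans (connect_restrictS BB (connB b w bB wB)).
  case/predU1P: ab => [->|ab]; first exact: connect0.
  by apply: connect1; rewrite /restrict /= ab (subsetP AB a aA) (subsetP BB b bB).
move=> u w /setUP [uA|uB] /setUP [wA|wB]; last 2 first.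
- by rewrite (sym_connect_sym (restrict_sym _)); apply: A_to_B.
- exact: connect_restrictS BB (connB u w uB wB).
- exact: connect_restrictS AB (connA u w uA wA).
- exact: A_to_B.
Qed.

Lemma inner_not_leaf a c d : r a c -> r c d -> a != d -> ~~ leaf r c.
Proof.
move=> rac rcd ad; rewrite /leaf; apply: contra_neq ad => deg1.
have : #|[set a; d]| <= #|[set u | r c u]|.
  by apply/subset_leq_card/subsetP => u; rewrite !inE => /orP [] /eqP ->; rewrite // r_sym.
by rewrite deg1 cards2; case: eqP.
Qed.

Lemma uniq_path_restrict_nonleaf (A U : {set T}) a p :
  (forall s, s \in U -> ~~ leaf r s -> s \in A) -> a \in A -> last a p \in A ->
  uniq (a :: p) -> path (restrict r U) a p -> path (restrict r A) a p.
Proof.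
move=> nonleafA; elim: p a => [|c p IH] a //= aA lA /andP [ap up] /andP [/and3P [rac _ cU] cp].
have cA : c \in A.
  case: p {IH} lA up cp ap => [//|d p] _ _ /= /andP [/and3P [rcd _ _] _].
  by rewrite !inE !negb_or => /and3P [_ ad _]; apply: nonleafA cU (inner_not_leaf rac rcd ad).
by rewrite /restrict /= rac aA cA IH.
Qed.

Lemma induces_connected_trim (U A : {set T}) :
  induces_connected r U -> A \subset U -> (forall s, s \in U -> ~~ leaf r s -> s \in A) ->
  induces_connected r A.
Proof.
move=> connU AU nonleafA a b aA bA.
have /connectP [p ap lp] := connU a b (subsetP AU a aA) (subsetP AU b bA).
rewrite lp in bA *; case: (shortenP ap) bA => q aq uq _ lq; apply/connectP; exists q => //.
exact: uniq_path_restrict_nonleaf nonleafA aA lq uq aq.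
Qed.

End Subtrees.

Lemma bags_meeting_path_connected (N V : finType) (tN : rel N) (e : rel V)
    (hat : N -> {set V}) a p :
  symmetric tN -> vine_decomp tN [set: V] e hat -> path e a p ->
  induces_connected tN [set s | has (mem (hat s)) (a :: p)].
Proof.
move=> tN_sym [_ hat_conn hat_edge]; elim: p a => [|c p IH] a.
  have -> : [set s | has (mem (hat s)) [:: a]] = [set s | a \in hat s].
    by apply/setP => s; rewrite !inE /= orbF.
  by move=> _; apply: (hat_conn a (in_setT a)).2.
case/andP=> eac cp.
have -> : [set s | has (mem (hat s)) [:: a, c & p]] =
          [set s | a \in hat s] :|: [set s | has (mem (hat s)) (c :: p)].
  by apply/setP => s; rewrite !inE.
have [s1 [s2 [as1 cs2 s12]]] := hat_edge a c (in_setT a) (in_setT c) eac.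
apply: (induces_connectedU tN_sym (hat_conn a (in_setT a)).2 (IH c cp) _ _ s12).
  by rewrite inE.
by rewrite inE /= cs2.
Qed.

Lemma component_notin (V : finType) (e : rel V) (X C : {set V}) v :
  component_of_minus e X C -> v \in C -> v \notin X.
Proof.
case=> x0 x0X ->; rewrite inE => /connectP [p x0p ->].
case/lastP: p x0p => [//|p w]; rewrite last_rcons rcons_path.
by case/andP=> _ /and3P [_ _]; rewrite inE.
Qed.

Lemma component_closed (V : finType) (e : rel V) (X C : {set V}) u v :
  component_of_minus e X C -> u \in C -> e u v -> v \notin X -> v \in C.
Proof.
move=> compC uC; have uX := component_notin compC uC.
move: compC uC => [x0 _ ->]; rewrite !inE => x0u uv vX.
by apply: connect_trans x0u (connect1 _); rewrite /restrict /= uv !inE uX vX.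
Qed.

Lemma component_path_closed (V : finType) (e : rel V) (X C : {set V}) u p :
  component_of_minus e X C -> u \in C -> path (rel_head_notin e X) u p -> last u p \in C.
Proof.
move=> compC; elim: p u => //= c p IH u uC /andP [/andP [uc cX] cp].
exact: IH (component_closed compC uC uc cX) cp.
Qed.

Lemma card_paths_meeting (V : finType) (D Z W : {set V}) (f : V -> seq V) :
  paths_disjoint D f -> (forall a v, a \in D -> v \in a :: f a -> v \in W) ->
  #|[set a in D | has (mem Z) (a :: f a)]| <= #|Z :&: W|.
Proof.
move=> f_disj fW; set Q := [set a in D | _].
pose hit a := nth a (a :: f a) (find (mem Z) (a :: f a)).
have hitP a : a \in Q -> [/\ a \in D, hit a \in a :: f a & hit a \in Z].
  rewrite inE => /andP [aD aZ]; split=> //; last exact: nth_find.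
  by apply: mem_nth; rewrite -has_find.
have hit_inj : {in Q &, injective hit}.
  move=> a b /hitP [aD ha _] /hitP [bD hb _] hab.
  by apply: f_disj aD bD ha _; rewrite hab.
rewrite -(card_in_imset hit_inj); apply/subset_leq_card/subsetP => _ /imsetP [a aQ ->].
by have [aD ha hZ] := hitP a aQ; rewrite inE hZ (fW a _ aD ha).
Qed.

Section Construction.
Variables (V N : finType) (e : rel V) (tN : rel N) (hat : N -> {set V}).
Variables (X C : {set V}) (t : N) (f : V -> seq V).
Hypothesis tN_sym : symmetric tN.
Hypothesis hat_vine : vine_decomp tN [set: V] e hat.
Hypothesis compC : component_of_minus e X C.
Hypothesis hat_tC : hat t :&: C = set0.
Hypotheses (f_to : paths_to (rel_head_notin e X) (hat t) X f) (f_disj : paths_disjoint X f).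

Definition linked_lab s :=
  if leaf tN s && (s != t) then hat s :&: (X :|: C)
  else (hat s :&: C) :|: [set x in X | has (mem (hat s)) (x :: f x)].

Lemma path_avoids_C a v : a \in X -> v \in a :: f a -> v \notin C.
Proof.
move=> aX va; have [fa fB] := f_to aX; apply/negP => vC.
move: fa fB; case/splitPl: va => p1 p2 lp1; rewrite cat_path last_cat lp1.
case/andP=> _ p2_ p2B.
have : last v p2 \in hat t :&: C by rewrite inE p2B (component_path_closed compC vC p2_).
by rewrite hat_tC inE.
Qed.

Lemma linked_lab_sub s : linked_lab s \subset X :|: C.
Proof.
rewrite /linked_lab; case: ifP => _; first exact: subsetIr.
by apply/subsetP => v; rewrite !inE => /orP [/andP [_ ->]|/andP [-> _]]; rewrite ?orbT.
Qed.

Lemma mem_linked_lab s v : v \in X :|: C -> v \in hat s -> v \in linked_lab s.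
Proof.
move=> vXC vs; rewrite /linked_lab; case: ifP => _; first by rewrite inE vs.
by case/setUP: vXC => [vX|vC]; rewrite !inE ?vC ?vX /= ?vs ?orbT.
Qed.

Lemma linked_lab_connected v :
  v \in X :|: C -> induces_connected tN [set s | v \in linked_lab s].
Proof.
case: hat_vine => _ hat_conn _; case/setUP => [vX|vC]; last first.
  have -> : [set s | v \in linked_lab s] = [set s | v \in hat s].
    apply/setP => s; rewrite !inE /linked_lab; case: ifP => _; rewrite !inE vC ?orbT ?andbT //.
    by rewrite (negbTE (component_notin compC vC)) orbF.
  exact: (hat_conn v (in_setT v)).2.
have f_path := sub_path (@head_notin_sub _ e X) (f_to vX).1.
apply: (induces_connected_trim tN_sym (bags_meeting_path_connected tN_sym hat_vine f_path)).
  apply/subsetP => s; rewrite !inE /linked_lab; case: ifP => _; rewrite !inE /=.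
    by case/andP=> ->.
  by case/orP => [/andP [-> _]|/andP [_ ->]].
move=> s; rewrite inE => vs /negbTE nonleaf.
by rewrite inE /linked_lab nonleaf !inE vX vs orbT.
Qed.

Lemma linked_lab_t : linked_lab t = X.
Proof.
apply/setP => v; rewrite /linked_lab eqxx andbF !inE.
have [vX|vX] := boolP (v \in X); last first.
  by rewrite orbF; apply/negP => /andP [vt vC]; have := in_set0 v; rewrite -hat_tC inE vt vC.
suff -> : has (mem (hat t)) (v :: f v) by rewrite andbT orbT.
by apply/hasP; exists (last v (f v)); [exact: mem_last | exact: (f_to vX).2].
Qed.

Lemma linked_lab_leaf s : leaf tN s -> s != t -> linked_lab s \subset hat s.
Proof. by move=> sleaf st; rewrite /linked_lab sleaf st subsetIl. Qed.

Lemma card_linked_lab s : #|linked_lab s| <= #|hat s|.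
Proof.
rewrite /linked_lab; case: ifP => _; first exact/subset_leq_card/subsetIl.
apply: leq_trans (leq_card_setU _ _) _; rewrite -(cardsID C (hat s)) leq_add2l setDE.
by apply: card_paths_meeting f_disj _ => a v aX va; rewrite inE (path_avoids_C aX va).
Qed.

Lemma linked_lab_vine : vine_decomp tN (X :|: C) e linked_lab.
Proof.
case: hat_vine => _ hat_conn hat_edge; split=> [s|v vXC|u v uXC vXC uv].
- exact: linked_lab_sub.
- have [[s vs] _] := hat_conn v (in_setT v).
  by split; [exists s; exact: mem_linked_lab | exact: linked_lab_connected].
- have [s [s' [us vs' ss']]] := hat_edge u v (in_setT u) (in_setT v) uv.
  by exists s, s'; rewrite !mem_linked_lab.
Qed.

End Construction.

Theorem lemma2p8 (V N : finType) (e : rel V) (tN : rel N)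
    (hat : N -> {set V}) (X C : {set V}) (t : N) :
  simple_graph e ->
  is_tree tN ->
  vine_decomp tN [set: V] e hat ->
  component_of_minus e X C ->
  hat t :&: C = set0 ->
  (forall S : {set V}, separates e S X (hat t) -> #|X| <= #|S|) ->
  exists lab : N -> {set V},
    [/\ vine_decomp tN (X :|: C) e lab,
        lab t = X,
        (forall s, leaf tN s -> s != t -> lab s \subset hat s) &
        (forall s, #|lab s| <= #|hat s|)].
Proof.
move=> _ [_ [tN_sym _] _ _] hat_vine compC hat_tC sepX.
have [f f_to f_disj] :
    exists2 f, paths_to (rel_head_notin e X) (hat t) X f & paths_disjoint X f.
  have [D [f [DX cardD f_to f_disj]]] :=
    menger (fun S sepS => sepX S (separates_head_notin sepS)).
  have D_eq : D = X by apply/eqP; rewrite eqEcard DX cardD leqnn.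
  by rewrite D_eq in f_to f_disj; exists f.
exists (linked_lab tN hat X C t f); split.
- exact: linked_lab_vine tN_sym hat_vine compC f_to.
- exact: (linked_lab_t tN hat_tC f_to).
- exact: linked_lab_leaf.
- exact: (card_linked_lab tN compC hat_tC f_to f_disj).
Qed.
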